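(* Let $\mathcal X \xrightarrow{i_*} \mathcal T \xrightarrow{j^!} \mathcal Y$ be a recollement, let $S_{\mathcal X}=\{X_1,\dots,X_m\}$ be a simple-minded collection of $\mathcal X$ and $S_{\mathcal Y}=\{Y_1,\dots,Y_n\}$ a simple-minded collection of $\mathcal Y$, and let $W_1,\dots,W_n$ be the objects defined in the context. Then $$S_{\mathcal T}=\langle S_{\mathcal X},S_{\mathcal Y}\rangle=\{i_*(X_1),\dots,i_*(X_m),W_1,\dots,W_n\}$$ is a simple-minded collection of $\mathcal T$.
   Context: Let $K$ be an algebraically closed field. All triangulated categories are $K$-linear, Hom-finite and Krull–Schmidt, with shift functor $[1]$. A recollement of triangulated categories $\mathcal X,\mathcal T,\mathcal Y$ consists of triangle functors $i^*,i^!:\mathcal T\to\mathcal X$, $i_*=i_!:\mathcal X\to\mathcal T$, $j_!,j_*:\mathcal Y\to\mathcal T$, $j^!=j^*:\mathcal T\to\mathcal Y$ such that $(i^*,i_* )$, $(i_*,i^!)$, $(j_!,j^!)$, $(j^!,j_* )$ are adjoint pairs; $i_*,j_*,j_!$ are fully faithful; $i^!j_*=0$ (hence $j^!i_*=0$ and $i^*j_!=0$); and for every $T\in\mathcal T$ there are triangles $i_*i^!T\to T\to j_*j^!T\to i_*i^!T[1]$ and $j_!j^!T\to T\to i_*i^*T\to j_!j^!T[1]$ (given by the units/counits). A simple-minded collection of a triangulated category $\mathcal C$ is a finite set $S=\{S_1,\dots,S_n\}$ of objects with $\dim_K\mathrm{Hom}(S_i,S_j)=\delta_{ij}$, $\mathrm{Hom}(S_i,S_j[k])=0$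 for all $k<0$, and such that the smallest thick triangulated subcategory containing $S$ is $\mathcal C$. For such $S$ and $a\in\mathbb Z$, $\mathrm{Filt}\,S[\geq a]$ (resp. $\mathrm{Filt}\,S[\leq a]$) denotes the extension closure of $\{S_i[k]: k\ge a\}$ (resp. $k\le a$); $(\mathrm{Filt}\,S[\geq 0],\mathrm{Filt}\,S[\leq 0])$ is a bounded $t$-structure (aisle, coaisle) on $\mathcal C$, in particular $\mathrm{Hom}(\mathrm{Filt}\,S[\ge 0],\mathrm{Filt}\,S[\le -1])=0$ and every object $C$ lies in a triangle $U\to C\to V\to U[1]$ with $U\in \mathrm{Filt}\,S[\ge 0]$, $V\in\mathrm{Filt}\,S[\le -1]$. Gluing construction: given simple-minded collections $S_{\mathcal X}=\{X_1,\dots,X_m\}$ of $\mathcal X$ and $S_{\mathcal Y}=\{Y_1,\dots,Y_n\}$ of $\mathcal Y$, for each $i$ take the truncation triangle $U_i\xrightarrow{g}i^!j_!(Y_i)\to V_i\to U_i[1]$ in $\mathcal X$ with $U_i\in\mathrm{Filt}\,S_{\mathcal X}[\ge0]$, $V_i\in\mathrm{Filt}\,S_{\mathcal X}[\le -1]$, let $f:i_*i^!j_!(Y_i)\to j_!(Y_i)$ be the counit, and define $W_i$ by the triangle $(\#)$: $i_*(U_i)\xrightarrow{f\circ i_*(g)} j_!(Y_i)\to W_i\to i_*(U_i)[1]$. By the octahedral axiom there is also a triangle $(\#\#)$: $i_*(V_i)\to W_i\to j_*(Y_i)\to i_*(V_i)[1]$. The glued collection is the ordered collection $\langle S_{\mathcal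 X},S_{\mathcal Y}\rangle=\{i_*(X_1),\dots,i_*(X_m),W_1,\dots,W_n\}$ (well defined up to isomorphism). *)

From HB Require Import structures.
From mathcomp Require Import all_boot all_order all_algebra.
Set Implicit Arguments. Unset Strict Implicit. Unset Printing Implicit Defensive.
Import GRing.Theory.
Local Open Scope ring_scope.

(* (Mor X Y : vectType K is a finite-dimensional K-vector space)        *)
Record cat_data (K : fieldType) := CatData {
  Obj : Type;
  Mor : Obj -> Obj -> vectType K;
  mcomp : forall X Y Z : Obj, Mor Y Z -> Mor X Y -> Mor X Z;
  idm : forall X : Obj, Mor X X }.
Arguments Obj {K} c.
Arguments Mor {K} c X Y.
Arguments mcomp {K} c {X Y Z} g f.
Arguments idm {K} c X.

Section Cat.
Variables (K : fieldType) (C : cat_data K).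

Definition is_cat : Prop :=
  [/\ (forall X Y Z W (h : Mor C Z W) (g : Mor C Y Z) (f : Mor C X Y),
          mcomp C h (mcomp C g f) = mcomp C (mcomp C h g) f),
      (forall X Y (f : Mor C X Y), mcomp C (idm C Y) f = f),
      (forall X Y (f : Mor C X Y), mcomp C f (idm C X) = f),
      (forall X Y Z (f : Mor C X Y) (a : K) (g g' : Mor C Y Z),
          mcomp C (a *: g + g') f = a *: mcomp C g f + mcomp C g' f) &
      (forall X Y Z (g : Mor C Y Z) (a : K) (f f' : Mor C X Y),
          mcomp C g (a *: f + f') = a *: mcomp C g f + mcomp C g f')].

Definition is_iso X Y (f : Mor C X Y) : Prop :=
  exists g : Mor C Y X, mcomp C g f = idm C X /\ mcomp C f g = idm C Y.

Definition iso_obj (X Y : Obj C) : Prop := exists f : Mor C X Y, is_iso f.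

Definition is_zero_obj (Z : Obj C) : Prop := idm C Z = 0.

Definition is_dsum (X : Obj C) r (Y : 'I_r -> Obj C)
    (inj : forall k, Mor C (Y k) X) (proj : forall k, Mor C X (Y k)) : Prop :=
  [/\ (forall k, mcomp C (proj k) (inj k) = idm C (Y k)),
      (forall k l, k != l -> mcomp C (proj k) (inj l) = 0) &
      \sum_(k < r) mcomp C (inj k) (proj k) = idm C X].

Definition local_end (Y : Obj C) : Prop :=
  idm C Y != 0 /\
  forall f : Mor C Y Y, is_iso f \/ is_iso (idm C Y - f).

Definition is_additive : Prop :=
  (exists Z, is_zero_obj Z) /\
  forall X1 X2 : Obj C, exists X : Obj C, exists inj, exists proj,
     @is_dsum X 2 (fun k => if val k == 0%N then X1 else X2) inj proj.

Definition krull_schmidt : Prop :=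
  forall X : Obj C, exists r, exists Y : 'I_r -> Obj C, exists inj, exists proj,
     @is_dsum X r Y inj proj /\ forall k, local_end (Y k).

End Cat.

Record tri_data (K : fieldType) := TriData {
  tcat :> cat_data K;
  sh : Obj tcat -> Obj tcat;
  shm : forall X Y, Mor tcat X Y -> Mor tcat (sh X) (sh Y);
  shinv : Obj tcat -> Obj tcat;          (* object part of a quasi-inverse *)
  dist : forall X Y Z : Obj tcat,
     Mor tcat X Y -> Mor tcat Y Z -> Mor tcat Z (sh X) -> Prop }.
Arguments sh {K} t X.
Arguments shm {K} t {X Y} f.
Arguments shinv {K} t X.
Arguments dist {K} t {X Y Z} f g h.

Section Tri.
Variables (K : fieldType) (T : tri_data K).

Definition shift_functor_ax : Prop :=
  [/\ (forall X, shm T (idm T X) = idm T (sh T X)),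
      (forall X Y Z (g : Mor T Y Z) (f : Mor T X Y),
          shm T (mcomp T g f) = mcomp T (shm T g) (shm T f)),
      (forall X Y (a : K) (f f' : Mor T X Y),
          shm T (a *: f + f') = a *: shm T f + shm T f'),
      (forall X Y, bijective (@shm K T X Y)) &
      (forall X, iso_obj (sh T (shinv T X)) X)].

Definition TR1 : Prop :=
  [/\
      (forall X Y Z X' Y' Z' (f : Mor T X Y) (g : Mor T Y Z) (h : Mor T Z (sh T X))
              (f' : Mor T X' Y') (g' : Mor T Y' Z') (h' : Mor T Z' (sh T X'))
              (a : Mor T X X') (b : Mor T Y Y') (c : Mor T Z Z'),
          is_iso a -> is_iso b -> is_iso c ->
          mcomp T b f = mcomp T f' a -> mcomp T c g = mcomp T g' b ->
          mcomp T (shm T a) h = mcomp T h' c ->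
          dist T f g h -> dist T f' g' h'),
      (forall X, exists Z, is_zero_obj Z /\
          dist T (idm T X) (0 : Mor T X Z) (0 : Mor T Z (sh T X))) &
      (forall X Y (f : Mor T X Y), exists Z (g : Mor T Y Z) (h : Mor T Z (sh T X)),
          dist T f g h)].

Definition TR2 : Prop :=
  forall X Y Z (f : Mor T X Y) (g : Mor T Y Z) (h : Mor T Z (sh T X)),
    dist T f g h <-> dist T g h (- shm T f).

Definition TR3 : Prop :=
  forall X Y Z X' Y' Z' (f : Mor T X Y) (g : Mor T Y Z) (h : Mor T Z (sh T X))
         (f' : Mor T X' Y') (g' : Mor T Y' Z') (h' : Mor T Z' (sh T X'))
         (a : Mor T X X') (b : Mor T Y Y'),
    dist T f g h -> dist T f' g' h' -> mcomp T b f = mcomp T f' a ->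
    exists c : Mor T Z Z',
      mcomp T c g = mcomp T g' b /\ mcomp T (shm T a) h = mcomp T h' c.

Definition TR4 : Prop :=
  forall X Y Z Z' X' Y' (f : Mor T X Y) (g : Mor T Y Z)
         (f1 : Mor T Y Z') (f2 : Mor T Z' (sh T X))
         (g1 : Mor T Z X') (g2 : Mor T X' (sh T Y))
         (h1 : Mor T Z Y') (h2 : Mor T Y' (sh T X)),
    dist T f f1 f2 -> dist T g g1 g2 -> dist T (mcomp T g f) h1 h2 ->
    exists (u : Mor T Z' Y') (v : Mor T Y' X'),
      [/\ dist T u v (mcomp T (shm T f1) g2),
          mcomp T u f1 = mcomp T h1 g, mcomp T h2 u = f2,
          mcomp T v h1 = g1 & mcomp T g2 v = mcomp T (shm T f) h2].

Definition is_triangulated : Prop :=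
  [/\ [/\ is_cat T, is_additive T & krull_schmidt T], shift_functor_ax,
      TR1, TR2 & [/\ TR3 & TR4]].

Definition shiftZ (X : Obj T) (k : int) : Obj T :=
  match k with
  | Posz n => iter n (sh T) X
  | Negz n => iter n.+1 (shinv T) X
  end.

Definition is_thick (P : Obj T -> Prop) : Prop :=
  [/\ (forall X Y, iso_obj X Y -> P X -> P Y),
      (forall X, P X -> P (sh T X)),
      (forall X, P X -> P (shinv T X)),
      (forall X Y Z (f : Mor T X Y) (g : Mor T Y Z) (h : Mor T Z (sh T X)),
          dist T f g h -> P X -> P Y -> P Z) &
      (forall X A B inj proj,
          @is_dsum K T X 2 (fun k => if val k == 0%N then A else B) inj proj ->
          P X -> P A)].

Inductive Filt r (S : 'I_r -> Obj T) (range : int -> bool) : Obj T -> Prop :=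
  | Filt_gen i k : range k -> Filt S range (shiftZ (S i) k)
  | Filt_zero Z : is_zero_obj Z -> Filt S range Z
  | Filt_iso X Y : iso_obj X Y -> Filt S range X -> Filt S range Y
  | Filt_ext A B C (f : Mor T A B) (g : Mor T B C) (h : Mor T C (sh T A)) :
      dist T f g h -> Filt S range A -> Filt S range C -> Filt S range B.

Definition is_smc r (S : 'I_r -> Obj T) : Prop :=
  [/\ (forall i j, \dim (fullv : {vspace Mor T (S i) (S j)}) = nat_of_bool (i == j)),
      (forall i j (k : int), (k < 0)%R ->
          \dim (fullv : {vspace Mor T (S i) (shiftZ (S j) k)}) = 0%N) &
      (forall P : Obj T -> Prop, is_thick P -> (forall i, P (S i)) ->
          forall X, P X)].

End Tri.

Record tfun (K : fieldType) (A B : tri_data K) := TFun {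
  fobj :> Obj A -> Obj B;
  fmap : forall X Y, Mor A X Y -> Mor B (fobj X) (fobj Y);
  fphi : forall X, Mor B (fobj (sh A X)) (sh B (fobj X)) }.
Arguments fmap {K A B} t {X Y} _.
Arguments fphi {K A B} t X.

Section Fun.
Variables (K : fieldType) (A B : tri_data K).

Definition is_tri_functor (F : tfun A B) : Prop :=
  [/\ (forall X, fmap F (idm A X) = idm B (F X)) /\
      (forall X Y Z (g : Mor A Y Z) (f : Mor A X Y),
          fmap F (mcomp A g f) = mcomp B (fmap F g) (fmap F f)),
      (forall X Y (a : K) (f f' : Mor A X Y),
          fmap F (a *: f + f') = a *: fmap F f + fmap F f'),
      (forall X, is_iso (fphi F X)),
      (forall X Y (f : Mor A X Y),
          mcomp B (fphi F Y) (fmap F (shm A f)) = mcomp B (shm B (fmap F f)) (fphi F X)) &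
      (forall X Y Z (f : Mor A X Y) (g : Mor A Y Z) (h : Mor A Z (sh A X)),
          dist A f g h ->
          dist B (fmap F f) (fmap F g) (mcomp B (fphi F X) (fmap F h)))].

Definition fully_faithful (F : tfun A B) : Prop :=
  forall X Y, bijective (@fmap K A B F X Y).

Definition is_adjunction (F : tfun A B) (G : tfun B A)
    (eta : forall X : Obj A, Mor A X (G (F X)))
    (eps : forall Y : Obj B, Mor B (F (G Y)) Y) : Prop :=
  [/\ (forall X X' (f : Mor A X X'),
          mcomp A (fmap G (fmap F f)) (eta X) = mcomp A (eta X') f),
      (forall Y Y' (g : Mor B Y Y'),
          mcomp B g (eps Y) = mcomp B (eps Y') (fmap F (fmap G g))),
      (forall X, mcomp B (eps (F X)) (fmap F (eta X)) = idm B (F X)) &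
      (forall Y, mcomp A (fmap G (eps Y)) (eta (G Y)) = idm A (G Y))].

End Fun.

Record recollement_data (K : fieldType) (X T Y : tri_data K) := RecData {
  i_up_star  : tfun T X;
  i_low_star : tfun X T;   (* i_* = i_! *)
  i_up_shriek : tfun T X;
  j_low_shriek : tfun Y T;
  j_up : tfun T Y;         (* j^! = j^* *)
  j_low_star : tfun Y T;
  unit1 : forall U : Obj T, Mor T U (i_low_star (i_up_star U));
  counit1 : forall V : Obj X, Mor X (i_up_star (i_low_star V)) V;
  unit2 : forall V : Obj X, Mor X V (i_up_shriek (i_low_star V));
  counit2 : forall U : Obj T, Mor T (i_low_star (i_up_shriek U)) U;
  unit3 : forall W : Obj Y, Mor Y W (j_up (j_low_shriek W));
  counit3 : forall U : Obj T, Mor T (j_low_shriek (j_up U)) U;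
  unit4 : forall U : Obj T, Mor T U (j_low_star (j_up U));
  counit4 : forall W : Obj Y, Mor Y (j_up (j_low_star W)) W }.

Definition is_recollement (K : fieldType) (X T Y : tri_data K)
    (R : recollement_data X T Y) : Prop :=
  [/\ [/\ is_tri_functor (i_up_star R), is_tri_functor (i_low_star R),
          is_tri_functor (i_up_shriek R), is_tri_functor (j_low_shriek R) &
          is_tri_functor (j_up R) /\ is_tri_functor (j_low_star R)],
      [/\ is_adjunction (unit1 R) (counit1 R),
          is_adjunction (unit2 R) (counit2 R),
          is_adjunction (unit3 R) (counit3 R) &
          is_adjunction (unit4 R) (counit4 R)],
      [/\ fully_faithful (i_low_star R), fully_faithful (j_low_star R) &
          fully_faithful (j_low_shriek R)],
      (forall W : Obj Y, is_zero_obj (i_up_shriek R (j_low_star R W))) &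
      (forall U : Obj T,
          (exists h, dist T (counit2 R U) (unit4 R U) h) /\
          (exists h, dist T (counit3 R U) (unit1 R U) h))].

Definition glue (K : fieldType) (X T : tri_data K) (iL : tfun X T) m n
    (SX : 'I_m -> Obj X) (W : 'I_n -> Obj T) : 'I_(m + n) -> Obj T :=
  fun k => match split k with inl a => iL (SX a) | inr b => W b end.

(* Each W_b sits in two triangles: j_!(Y_b) -> W_b -> i_*(U_b)[1], which is (#)
   rotated, and i_*(V_b) -> W_b -> j_*(j^!(j_!(Y_b))), which is (##).  Morphisms
   out of a shifted W are computed with the first one and morphisms into W with
   the second.  The recollement kills Hom(j_! _, i_* _) and Hom(i_* _, j_* _) and
   identifies Hom(j_! C, j_* D) with Hom(C, D); the truncation conditions
   U_b in Filt S_X[>=0] and V_b in Filt S_X[<=-1] kill everything coming from X.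
   A thick subcategory containing the glued collection contains i_*(X) and,
   through (#), j_!(Y); hence every Q, by the triangle j_! j^! Q -> Q -> i_* i^* Q. *)

From HB Require Import structures.
From mathcomp Require Import all_boot all_order all_algebra.
From Stdlib Require Import FunctionalExtensionality.
Set Implicit Arguments. Unset Strict Implicit. Unset Printing Implicit Defensive.
Set Maximal Implicit Insertion.
Import Order.TTheory GRing.Theory Num.Theory.
Local Open Scope ring_scope.

Section LinearMaps.
Variables (K : fieldType) (U V : vectType K) (f : U -> V).
Hypothesis f_lin : linear f.

HB.instance Definition _ := GRing.isLinear.Build K U V _ f f_lin.

Lemma linear_fun0 : f 0 = 0. Proof. exact: raddf0. Qed.
Lemma linear_funN u : f (- u) = - f u. Proof. exact: raddfN. Qed.
Lemma linear_funD u v : f (u + v) = f u + f v. Proof. exact: raddfD. Qed.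
Lemma linear_funB u v : f (u - v) = f u - f v. Proof. exact: raddfB. Qed.

Lemma dimv_inj_onto :
  injective f -> (forall v, exists u, v = f u) -> \dim {:U} = \dim {:V}.
Proof.
move=> f_inj f_onto.
have ker0 : lker (linfun f) = 0%VS.
  by apply/eqP/lker0P => u u'; rewrite !lfunE; apply: f_inj.
rewrite -(limg_dim_eq (f := linfun f) (U := fullv)); last by rewrite ker0 capv0.
congr (\dim _); apply/eqP; rewrite eqEsubv subvf /=; apply/subvP => v _.
by have [u ->] := f_onto v; apply/memv_imgP; exists u; rewrite ?memvf ?lfunE.
Qed.
End LinearMaps.

Lemma dimv_bij (K : fieldType) (U V : vectType K) (f : U -> V) :
  linear f -> bijective f -> \dim {:U} = \dim {:V}.
Proof.
move=> f_lin [f' fK f'K]; apply: dimv_inj_onto f_lin (can_inj fK) _.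
by move=> v; exists (f' v).
Qed.

Lemma dimv_eq0P (K : fieldType) (U : vectType K) :
  (forall u : U, u = 0) <-> \dim {:U} = 0%N.
Proof.
split=> [U0|/eqP].
  by apply/eqP; rewrite dimv_eq0 -subv0; apply/subvP => u _; rewrite (U0 u) mem0v.
by rewrite dimv_eq0 => /eqP U0 u; apply/eqP; rewrite -memv0 -U0 memvf.
Qed.

Definition hom0 (K : fieldType) (C : cat_data K) (A B : Obj C) :=
  forall f : Mor C A B, f = 0.

Section Categories.
Variables (K : fieldType) (C : cat_data K).
Hypothesis HC : is_cat C.
Local Notation "g \oo f" := (mcomp C g f) (at level 40, left associativity).

Lemma compA X Y Z W (h : Mor C Z W) (g : Mor C Y Z) (f : Mor C X Y) :
  h \oo (g \oo f) = h \oo g \oo f.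
Proof. by case: HC. Qed.
Lemma comp1l X Y (f : Mor C X Y) : idm C Y \oo f = f.
Proof. by case: HC. Qed.
Lemma comp1r X Y (f : Mor C X Y) : f \oo idm C X = f.
Proof. by case: HC. Qed.
Lemma comp_linearl X Y Z (f : Mor C X Y) : linear (fun g : Mor C Y Z => g \oo f).
Proof. by case: HC => _ _ _ + _ a g g'; apply. Qed.
Lemma comp_linearr X Y Z (g : Mor C Y Z) : linear (fun f : Mor C X Y => g \oo f).
Proof. by case: HC => _ _ _ _ + a f f'; apply. Qed.

Lemma comp0l X Y Z (f : Mor C X Y) : (0 : Mor C Y Z) \oo f = 0.
Proof. exact: linear_fun0 (comp_linearl (Z:=Z) f). Qed.
Lemma comp0r X Y Z (g : Mor C Y Z) : g \oo (0 : Mor C X Y) = 0.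
Proof. exact: linear_fun0 (comp_linearr (X:=X) g). Qed.
Lemma compNl X Y Z (f : Mor C X Y) (g : Mor C Y Z) : (- g) \oo f = - (g \oo f).
Proof. exact: linear_funN (comp_linearl (Z:=Z) f) g. Qed.
Lemma compNr X Y Z (f : Mor C X Y) (g : Mor C Y Z) : g \oo (- f) = - (g \oo f).
Proof. exact: linear_funN (comp_linearr (X:=X) g) f. Qed.

Lemma iso_obj_refl (X : Obj C) : iso_obj X X.
Proof. by exists (idm C X), (idm C X); rewrite comp1l. Qed.
Lemma iso_obj_sym (X Y : Obj C) : iso_obj X Y -> iso_obj Y X.
Proof. by case=> f [f' [fK f'K]]; exists f', f. Qed.
Lemma iso_obj_trans (X Y Z : Obj C) : iso_obj X Y -> iso_obj Y Z -> iso_obj X Z.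
Proof.
case=> f [f' [fK f'K]] [g [g' [gK g'K]]]; exists (g \oo f), (f' \oo g'); split.
  by rewrite compA -(compA f') gK comp1r fK.
by rewrite compA -(compA g) f'K comp1r g'K.
Qed.

Lemma hom0_isoL (A A' B : Obj C) : iso_obj A A' -> hom0 A B -> hom0 A' B.
Proof.
by case=> f [f' [_ f'K]] AB0 x; rewrite -(comp1r x) -f'K compA (AB0 (x \oo f)) comp0l.
Qed.
Lemma hom0_isoR (A B B' : Obj C) : iso_obj B B' -> hom0 A B -> hom0 A B'.
Proof.
by case=> f [f' [_ f'K]] AB0 x; rewrite -(comp1l x) -f'K -compA (AB0 (f' \oo x)) comp0r.
Qed.
Lemma hom0_zeroL (Z A : Obj C) : is_zero_obj Z -> hom0 Z A.
Proof. by move=> Z0 x; rewrite -(comp1r x) Z0 comp0r. Qed.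
Lemma hom0_zeroR (Z A : Obj C) : is_zero_obj Z -> hom0 A Z.
Proof. by move=> Z0 x; rewrite -(comp1l x) Z0 comp0l. Qed.

Lemma is_dsum_family_eq (X : Obj C) r (Ys Ys' : 'I_r -> Obj C) inj proj :
  Ys =1 Ys' -> @is_dsum K C X r Ys inj proj ->
  exists inj' proj', @is_dsum K C X r Ys' inj' proj'.
Proof. by move/functional_extensionality => <-; exists inj, proj. Qed.

Lemma hom0_dim (A B : Obj C) : hom0 A B <-> \dim {: Mor C A B} = 0%N.
Proof. exact: dimv_eq0P. Qed.

Lemma dim_hom_isoR (A B B' : Obj C) : iso_obj B B' ->
  \dim {: Mor C A B} = \dim {: Mor C A B'}.
Proof.
case=> f [f' [fK f'K]]; apply: (dimv_bij (comp_linearr (X:=A) f)).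
by exists (fun x => f' \oo x) => x; rewrite compA ?fK ?f'K comp1l.
Qed.
End Categories.

Section Triangulated.
Variables (K : fieldType) (T : tri_data K).
Hypothesis HT : is_triangulated T.
Local Notation "g \oo f" := (mcomp T g f) (at level 40, left associativity).

Lemma tri_cat : is_cat T. Proof. by case: HT => -[]. Qed.
Let HC := tri_cat.

Lemma shm_linear (X Y : Obj T) : linear (@shm K T X Y).
Proof. by case: HT => _ [_ _ + _ _] _ _ _ a f f'; apply. Qed.
Lemma shm_bij (X Y : Obj T) : bijective (@shm K T X Y).
Proof. by case: HT => _ []. Qed.
Lemma shm_id (X : Obj T) : shm T (idm T X) = idm T (sh T X).
Proof. by case: HT => _ []. Qed.
Lemma shm_comp (X Y Z : Obj T) (g : Mor T Y Z) (f : Mor T X Y) :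
  shm T (g \oo f) = shm T g \oo shm T f.
Proof. by case: HT => _ []. Qed.
Lemma sh_shinv_iso (X : Obj T) : iso_obj (sh T (shinv T X)) X.
Proof. by case: HT => _ []. Qed.

Lemma shm0 (X Y : Obj T) : shm T (0 : Mor T X Y) = 0.
Proof. exact: linear_fun0 (@shm_linear X Y). Qed.
Lemma shm_inj (X Y : Obj T) : injective (@shm K T X Y).
Proof. exact: bij_inj (shm_bij X Y). Qed.
Lemma shm_onto (X Y : Obj T) (f : Mor T (sh T X) (sh T Y)) :
  exists f0, f = shm T f0.
Proof. by have [f' _ f'K] := shm_bij X Y; exists (f' f); rewrite f'K. Qed.

Lemma idm_is_iso (X : Obj T) : is_iso (idm T X).
Proof. by exists (idm T X); rewrite (comp1l HC). Qed.

Lemma sh_iso (A B : Obj T) : iso_obj A B -> iso_obj (sh T A) (sh T B).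
Proof.
case=> f [f' [fK f'K]]; exists (shm T f), (shm T f').
by rewrite -!shm_comp fK f'K !shm_id.
Qed.
Lemma iter_sh_iso k (A B : Obj T) :
  iso_obj A B -> iso_obj (iter k (sh T) A) (iter k (sh T) B).
Proof. by elim: k => //= k IHk /IHk; apply: sh_iso. Qed.
Lemma sh_iso_reflect (A B : Obj T) : iso_obj (sh T A) (sh T B) -> iso_obj A B.
Proof.
case=> f [f' [fK f'K]].
have [f0 ?] := shm_onto f; have [f0' ?] := shm_onto f'; subst f f'.
by exists f0, f0'; split; apply: shm_inj; rewrite shm_comp ?fK ?f'K shm_id.
Qed.
Lemma shinv_sh_iso (A : Obj T) : iso_obj (shinv T (sh T A)) A.
Proof. exact/sh_iso_reflect/sh_shinv_iso. Qed.

Lemma iter_sh_zero k (Z : Obj T) : is_zero_obj Z -> is_zero_obj (iter k (sh T) Z).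
Proof.
by elim: k => //= k IHk /IHk Z0; rewrite /is_zero_obj -shm_id Z0 shm0.
Qed.

Lemma hom0_sh (A B : Obj T) : hom0 A B <-> hom0 (sh T A) (sh T B).
Proof.
split=> [AB0 f | AB0 f]; last by apply: shm_inj; rewrite (AB0 (shm T f)) shm0.
by have [f0 ->] := shm_onto f; rewrite (AB0 f0) shm0.
Qed.
Lemma hom0_iter_sh k (A B : Obj T) :
  hom0 A B -> hom0 (iter k (sh T) A) (iter k (sh T) B).
Proof. by elim: k => //= k IHk /IHk /hom0_sh. Qed.

Lemma hom0_shinv (A B : Obj T) : hom0 A (shinv T B) <-> hom0 (sh T A) B.
Proof.
split=> [/hom0_sh | AB0]; first exact (hom0_isoR HC (sh_shinv_iso B)).
by apply/hom0_sh; exact (hom0_isoR HC (iso_obj_sym (sh_shinv_iso B)) AB0).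
Qed.
Lemma hom0_iter_shinv k (A B : Obj T) :
  hom0 A (iter k (shinv T) B) <-> hom0 (iter k (sh T) A) B.
Proof.
elim: k A => [|k IHk] A //=.
rewrite -[sh T (iter k _ A)]/(iter k.+1 (sh T) A) iterSr.
exact: iff_trans (hom0_shinv A _) (IHk (sh T A)).
Qed.

Lemma tri_TR1 : TR1 T. Proof. by case: HT. Qed.
Lemma tri_TR2 : TR2 T. Proof. by case: HT. Qed.
Lemma dist_complete (X Y Z X' Y' Z' : Obj T) (f : Mor T X Y) (g : Mor T Y Z)
    (h : Mor T Z (sh T X)) (f' : Mor T X' Y') (g' : Mor T Y' Z')
    (h' : Mor T Z' (sh T X')) (a : Mor T X X') (b : Mor T Y Y') :
  dist T f g h -> dist T f' g' h' -> b \oo f = f' \oo a ->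
  exists c : Mor T Z Z', c \oo g = g' \oo b /\ shm T a \oo h = h' \oo c.
Proof. by case: HT => _ _ _ _ [+ _]; apply. Qed.
Lemma tri_TR4 : TR4 T. Proof. by case: HT => _ _ _ _ []. Qed.

Lemma dist_rot (X Y Z : Obj T) (f : Mor T X Y) (g : Mor T Y Z)
    (h : Mor T Z (sh T X)) :
  dist T f g h -> dist T g h (- shm T f).
Proof. by move/tri_TR2. Qed.

Lemma dist_iter_sh k (X Y Z : Obj T) (f : Mor T X Y) (g : Mor T Y Z)
    (h : Mor T Z (sh T X)) :
  dist T f g h ->
  exists (f' : Mor T (iter k (sh T) X) (iter k (sh T) Y))
         (g' : Mor T (iter k (sh T) Y) (iter k (sh T) Z))
         (h' : Mor T (iter k (sh T) Z) (sh T (iter k (sh T) X))), dist T f' g' h'.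
Proof.
move=> fgh; elim: k => [|k [f' [g' [h' fgh']]]]; first by exists f, g, h.
by exists (- shm T f'), (- shm T g'), (- shm T h'); do 3 apply: dist_rot.
Qed.

Lemma dist_zero_id (Q : Obj T) : exists P : Obj T,
  dist T (0 : Mor T P Q) (idm T Q) (0 : Mor T Q (sh T P)).
Proof.
have [iso_closed /(_ Q) [Z [_ dZ]] _] := tri_TR1; exists (shinv T Z).
have [c c_iso] := iso_obj_sym (sh_shinv_iso Z).
apply/tri_TR2; rewrite shm0 oppr0.
apply: (iso_closed _ _ _ _ _ _ _ _ _ _ _ _ (idm T Q) (idm T Q) c) dZ;
  rewrite ?(comp0r HC) ?(comp0l HC) //; exact: idm_is_iso.
Qed.

Lemma dist_lift (X Y Z : Obj T) (f : Mor T X Y) (g : Mor T Y Z)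
    (h : Mor T Z (sh T X)) (Q : Obj T) (a : Mor T Q Y) :
  dist T f g h -> g \oo a = 0 -> exists b, a = f \oo b.
Proof.
(* Compare the rotation of Q -id-> Q -> 0 with that of fgh: the induced map
   Q[1] -> X[1] is the shift of the lift. *)
move=> fgh ga0; have [_ /(_ Q) [? [_ dQ]] _] := tri_TR1.
have [|c [_]] := dist_complete (dist_rot dQ) (dist_rot fgh) (a := a) (b := 0).
  by rewrite (comp0l HC) ga0.
have [b ->] := shm_onto c.
rewrite shm_id (compNr HC) (comp1r HC) (compNl HC) -shm_comp.
by move/oppr_inj/shm_inj ->; exists b.
Qed.

Lemma dist_descend (X Y Z : Obj T) (f : Mor T X Y) (g : Mor T Y Z)
    (h : Mor T Z (sh T X)) (Q : Obj T) (a : Mor T Y Q) :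
  dist T f g h -> a \oo f = 0 -> exists c, a = c \oo g.
Proof.
move=> fgh af0; have [P dP] := dist_zero_id Q.
have [|c [ca _]] := dist_complete fgh dP (a := 0) (b := a).
  by rewrite (comp0l HC).
by exists c; rewrite ca (comp1l HC).
Qed.

Section DistinguishedHoms.
Variables (X Y Z : Obj T) (f : Mor T X Y) (g : Mor T Y Z) (h : Mor T Z (sh T X)).
Hypothesis fgh : dist T f g h.

Lemma hom0_dist_midR (Q : Obj T) : hom0 Q X -> hom0 Q Z -> hom0 Q Y.
Proof.
move=> QX0 QZ0 a; have [b ->] := dist_lift fgh (QZ0 (g \oo a)).
by rewrite (QX0 b) (comp0r HC).
Qed.

Lemma hom0_dist_midL (Q : Obj T) : hom0 X Q -> hom0 Z Q -> hom0 Y Q.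
Proof.
move=> XQ0 ZQ0 a; have [c ->] := dist_descend fgh (XQ0 (a \oo f)).
by rewrite (ZQ0 c) (comp0l HC).
Qed.

Lemma dim_hom_distR (Q : Obj T) : hom0 Q X -> hom0 Q (sh T X) ->
  \dim {: Mor T Q Y} = \dim {: Mor T Q Z}.
Proof.
move=> QX0 QsX0; apply: (dimv_inj_onto (comp_linearr HC (X := Q) g)).
  move=> a a' /eqP; rewrite -subr_eq0 -(linear_funB (comp_linearr HC g)) => /eqP.
  by case/(dist_lift fgh)=> b /eqP; rewrite (QX0 b) (comp0r HC) subr_eq0 => /eqP.
move=> c; have [a ->] := dist_lift (dist_rot fgh) (QsX0 (h \oo c)).
by exists a.
Qed.

Lemma dim_hom_distL (Q : Obj T) : hom0 X Q -> hom0 (sh T X) Q ->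
  \dim {: Mor T Z Q} = \dim {: Mor T Y Q}.
Proof.
move=> XQ0 sXQ0; apply: (dimv_inj_onto (comp_linearl HC (Z := Q) g)).
  move=> a a' /eqP; rewrite -subr_eq0 -(linear_funB (comp_linearl HC g)) => /eqP.
  case/(dist_descend (dist_rot fgh))=> c /eqP.
  by rewrite (sXQ0 c) (comp0l HC) subr_eq0 => /eqP.
move=> b; have [c ->] := dist_descend fgh (XQ0 (b \oo f)).
by exists c.
Qed.
End DistinguishedHoms.

Lemma thick_dist_mid (P : Obj T -> Prop) : is_thick P ->
  forall (X Y Z : Obj T) (f : Mor T X Y) (g : Mor T Y Z) (h : Mor T Z (sh T X)),
  dist T f g h -> P Z -> P (sh T X) -> P Y.
Proof.
case=> P_iso _ P_shinv P_dist _ X Y Z f g h /dist_rot/dist_rot fgh PZ PX.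
exact: P_iso (shinv_sh_iso Y) (P_shinv _ (P_dist _ _ _ _ _ _ fgh PZ PX)).
Qed.
End Triangulated.

Section TriangleFunctors.
Variables (K : fieldType) (A B : tri_data K).
Hypotheses (HA : is_triangulated A) (HB : is_triangulated B).
Variables (F : tfun A B).
Hypothesis HF : is_tri_functor F.
Let HCB := tri_cat HB.

Lemma fmap_id (X : Obj A) : fmap F (idm A X) = idm B (F X).
Proof. by case: HF => -[]. Qed.
Lemma fmap_comp (X Y Z : Obj A) (g : Mor A Y Z) (f : Mor A X Y) :
  fmap F (mcomp A g f) = mcomp B (fmap F g) (fmap F f).
Proof. by case: HF => -[]. Qed.
Lemma fmap_linear (X Y : Obj A) : linear (@fmap K A B F X Y).
Proof. by case: HF => _ + _ _ _ a f f'; apply. Qed.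
Lemma fmap0 (X Y : Obj A) : fmap F (0 : Mor A X Y) = 0.
Proof. exact: linear_fun0 (@fmap_linear X Y). Qed.
Lemma fmap_dist (X Y Z : Obj A) (f : Mor A X Y) (g : Mor A Y Z)
    (h : Mor A Z (sh A X)) :
  dist A f g h -> dist B (fmap F f) (fmap F g) (mcomp B (fphi F X) (fmap F h)).
Proof. by case: HF => _ _ _ _; apply. Qed.

Lemma tfun_iso (X Y : Obj A) : iso_obj X Y -> iso_obj (F X) (F Y).
Proof.
case=> f [f' [fK f'K]]; exists (fmap F f), (fmap F f').
by rewrite -!fmap_comp fK f'K !fmap_id.
Qed.
Lemma tfun_sh_iso (X : Obj A) : iso_obj (F (sh A X)) (sh B (F X)).
Proof. by exists (fphi F X); case: HF. Qed.
Lemma tfun_iter_sh_iso k (X : Obj A) :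
  iso_obj (F (iter k (sh A) X)) (iter k (sh B) (F X)).
Proof.
elim: k => [|k IHk] /=; first exact: iso_obj_refl HCB _.
exact (iso_obj_trans HCB (tfun_sh_iso _) (sh_iso HB IHk)).
Qed.
Lemma tfun_shinv_iso (X : Obj A) : iso_obj (F (shinv A X)) (shinv B (F X)).
Proof.
apply: (sh_iso_reflect HB); apply: (iso_obj_trans HCB (iso_obj_sym (tfun_sh_iso _))).
apply: (iso_obj_trans HCB (tfun_iso (sh_shinv_iso HA X))).
exact: iso_obj_sym (sh_shinv_iso HB _).
Qed.

Lemma dim_hom_ff : fully_faithful F ->
  forall X Y : Obj A, \dim {: Mor A X Y} = \dim {: Mor B (F X) (F Y)}.
Proof. by move=> F_ff X Y; apply: dimv_bij (@fmap_linear X Y) (F_ff X Y). Qed.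
Lemma hom0_ff : fully_faithful F -> forall X Y : Obj A, hom0 X Y -> hom0 (F X) (F Y).
Proof. by move=> F_ff X Y /hom0_dim XY0; apply/hom0_dim; rewrite -dim_hom_ff. Qed.

Lemma thick_preimage (P : Obj B -> Prop) : is_thick P -> is_thick (fun X => P (F X)).
Proof.
case=> P_iso P_sh P_shinv P_dist P_summand; split.
- by move=> X Y /tfun_iso; apply: P_iso.
- by move=> X /P_sh; apply: P_iso; apply: iso_obj_sym (tfun_sh_iso X).
- by move=> X /P_shinv; apply: P_iso; apply: iso_obj_sym (tfun_shinv_iso X).
- by move=> X Y Z f g h /fmap_dist; apply: P_dist.
move=> X X1 X2 inj proj [projK proj_inj idE] PX.
pose Xs (k : 'I_2) := if val k == 0%N then X1 else X2.
have FXs : (fun k => F (Xs k)) =1 (fun k => if val k == 0%N then F X1 else F X2).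
  by move=> k; apply: fun_if.
suff /(is_dsum_family_eq FXs) [inj' [proj' dsum']] :
    @is_dsum K B (F X) 2 (fun k => F (Xs k))
      (fun k => fmap F (inj k)) (fun k => fmap F (proj k)).
  exact: P_summand dsum' PX.
split.
- by move=> k; rewrite -fmap_comp projK fmap_id.
- by move=> k l kl; rewrite -fmap_comp proj_inj // fmap0.
- rewrite -fmap_id -idE !big_ord_recr !big_ord0 /= !add0r.
  by rewrite (linear_funD (@fmap_linear X X)) !fmap_comp.
Qed.
End TriangleFunctors.

Section Adjunctions.
Variables (K : fieldType) (A B : tri_data K).
Hypotheses (HA : is_triangulated A) (HB : is_triangulated B).
Variables (F : tfun A B) (G : tfun B A).
Hypotheses (HF : is_tri_functor F) (HG : is_tri_functor G).
Variables (eta : forall X : Obj A, Mor A X (G (F X)))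
          (eps : forall Y : Obj B, Mor B (F (G Y)) Y).
Hypothesis FG : is_adjunction eta eps.
Let HCA := tri_cat HA.
Let HCB := tri_cat HB.

Lemma adj_transposeK (X : Obj A) (D : Obj B) (f : Mor B (F X) D) :
  mcomp B (eps D) (fmap F (mcomp A (fmap G f) (eta X))) = f.
Proof.
case: FG => _ eps_nat triL _.
by rewrite (fmap_comp HF) (compA HCB) -eps_nat -(compA HCB) triL (comp1r HCB).
Qed.
Lemma adj_transposeVK (X : Obj A) (D : Obj B) (g : Mor A X (G D)) :
  mcomp A (fmap G (mcomp B (eps D) (fmap F g))) (eta X) = g.
Proof.
case: FG => eta_nat _ _ triR.
by rewrite (fmap_comp HG) -(compA HCA) eta_nat (compA HCA) triR (comp1l HCA).
Qed.

Lemma dim_hom_adj (X : Obj A) (D : Obj B) :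
  \dim {: Mor B (F X) D} = \dim {: Mor A X (G D)}.
Proof.
apply: (dimv_bij (f := fun f => mcomp A (fmap G f) (eta X))).
  by move=> a f f' /=; rewrite (fmap_linear HG) (comp_linearl HCA).
exists (fun g => mcomp B (eps D) (fmap F g)) => ? /=.
  exact: adj_transposeK.
exact: adj_transposeVK.
Qed.

Lemma hom0_adj (X : Obj A) (D : Obj B) : is_zero_obj (G D) -> hom0 (F X) D.
Proof.
move=> GD0; apply/hom0_dim; rewrite dim_hom_adj; apply/hom0_dim.
exact (hom0_zeroR HCA GD0).
Qed.

Lemma adj_unit_iso : fully_faithful F -> forall X : Obj A, iso_obj X (G (F X)).
Proof.
move=> F_ff X; case: FG => eta_nat _ triL triR.
have [e _ eVK] := F_ff _ _ : bijective (@fmap K A B F (G (F X)) X).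
exists (eta X), (e (eps (F X))); split.
  apply: (bij_inj (F_ff X X)).
  by rewrite (fmap_comp HF) eVK triL (fmap_id HF).
by rewrite -eta_nat eVK triR.
Qed.

Lemma adj_counit_iso : fully_faithful G -> forall D : Obj B, iso_obj (F (G D)) D.
Proof.
move=> G_ff D; case: FG => _ eps_nat triL triR.
have [e _ eVK] := G_ff _ _ : bijective (@fmap K B A G D (F (G D))).
exists (eps D), (e (eta (G D))); split.
  by rewrite eps_nat eVK triL.
apply: (bij_inj (G_ff D D)).
by rewrite (fmap_comp HG) eVK triR (fmap_id HG).
Qed.
End Adjunctions.

Section Filtrations.
Variables (K : fieldType) (T : tri_data K).
Hypothesis HT : is_triangulated T.
Variables (r : nat) (S : 'I_r -> Obj T).
Let HC := tri_cat HT.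

Lemma hom0_FiltR (R : int -> bool) (C B : Obj T) :
  (forall j l, R l -> hom0 C (shiftZ (S j) l)) -> Filt S R B -> hom0 C B.
Proof.
move=> CS0; elim=> {B} [j l /CS0 // | Z Z0 | B B' BB' _ CB0 |
                        B0 B B1 f g h fgh _ CB00 _ CB10].
- exact (hom0_zeroR HC Z0).
- exact (hom0_isoR HC BB' CB0).
- exact (hom0_dist_midR HT fgh CB00 CB10).
Qed.

Lemma hom0_FiltL (R : int -> bool) s (A D : Obj T) :
  (forall i k, R k -> hom0 (iter s (sh T) (shiftZ (S i) k)) D) ->
  Filt S R A -> hom0 (iter s (sh T) A) D.
Proof.
move=> SD0; elim=> {A} [i k /SD0 // | Z Z0 | A A' AA' _ AD0 |
                        A0 A A1 f g h fgh _ A0D0 _ A1D0].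
- exact (hom0_zeroL HC (iter_sh_zero HT s Z0)).
- exact (hom0_isoL HC (iter_sh_iso HT s AA') AD0).
- have [f' [g' [h' fgh']]] := dist_iter_sh HT s fgh.
  exact (hom0_dist_midL HT fgh' A0D0 A1D0).
Qed.

Hypothesis HS : is_smc S.

Lemma smc_hom0_sh t i j : (0 < t)%N -> hom0 (iter t (sh T) (S i)) (S j).
Proof.
case: t => // t _; case: HS => _ /(_ i j (Negz t) isT) /hom0_dim SS0 _.
exact/(hom0_iter_shinv HT t.+1).
Qed.

Lemma smc_hom0_shiftZ s (k : nat) (l : int) i j : l < (k + s)%N ->
  hom0 (iter s (sh T) (shiftZ (S i) k)) (shiftZ (S j) l).
Proof.
rewrite /= -iterD; case: l => [l | l] /= lt_l.
  rewrite ltz_nat addnC in lt_l.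
  rewrite -(subnKC (ltnW lt_l)) iterD.
  have SS0 : hom0 (iter (s + k - l) (sh T) (S i)) (S j).
    by apply: smc_hom0_sh; rewrite subn_gt0.
  exact (hom0_iter_sh HT (k := l) SS0).
by apply/(hom0_iter_shinv HT l.+1); rewrite -iterD; apply: smc_hom0_sh.
Qed.

Lemma hom0_Filt_aisle_coaisle (l0 : int) s (A B : Obj T) : l0 < s%:Z ->
  Filt S (fun k => 0 <= k) A -> Filt S (fun l => l <= l0) B ->
  hom0 (iter s (sh T) A) B.
Proof.
move=> lt_l0 FA FB; apply: (hom0_FiltL _ FA) => i [] // k _.
apply: (hom0_FiltR _ FB) => j l le_l; apply: smc_hom0_shiftZ.
by rewrite PoszD (le_lt_trans le_l) // (lt_le_trans lt_l0) // lerDr.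
Qed.
End Filtrations.

Section Recollement.
Variables (K : fieldType) (X T Y : tri_data K).
Hypotheses (HX : is_triangulated X) (HT : is_triangulated T) (HY : is_triangulated Y).
Variable R : recollement_data X T Y.
Hypothesis HR : is_recollement R.
Let HCY := tri_cat HY.

Local Notation i_star := (i_low_star R).
Local Notation i_shriek := (i_up_shriek R).
Local Notation j_shriek := (j_low_shriek R).
Local Notation j_up := (j_up R).
Local Notation j_star := (j_low_star R).

Let Hi_star : is_tri_functor i_star. Proof. by case: HR => -[]. Qed.
Let Hi_shriek : is_tri_functor i_shriek. Proof. by case: HR => -[]. Qed.
Let Hj_shriek : is_tri_functor j_shriek. Proof. by case: HR => -[]. Qed.
Let Hj_up : is_tri_functor j_up. Proof. by case: HR => -[_ _ _ _ []]. Qed.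
Let Hj_star : is_tri_functor j_star. Proof. by case: HR => -[_ _ _ _ []]. Qed.
Let adj_i : is_adjunction (unit2 R) (counit2 R). Proof. by case: HR => _ []. Qed.
Let adj_j_shriek : is_adjunction (unit3 R) (counit3 R). Proof. by case: HR => _ []. Qed.
Let adj_j_star : is_adjunction (unit4 R) (counit4 R). Proof. by case: HR => _ []. Qed.
Let ff_j_star : fully_faithful j_star. Proof. by case: HR => _ _ []. Qed.
Let ff_j_shriek : fully_faithful j_shriek. Proof. by case: HR => _ _ []. Qed.

Lemma hom0_istar_jstar (A : Obj X) (C : Obj Y) : hom0 (i_star A) (j_star C).
Proof.
case: HR => _ _ _ /(_ C) iC0 _.
exact (hom0_adj HX HT Hi_star Hi_shriek adj_i iC0).
Qed.

Lemma jup_istar_zero (A : Obj X) : is_zero_obj (j_up (i_star A)).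
Proof.
suff JA0 : hom0 (j_up (i_star A)) (j_up (i_star A)) by apply: JA0.
apply/hom0_dim; rewrite (dim_hom_adj HT HY Hj_up Hj_star adj_j_star); apply/hom0_dim.
exact: hom0_istar_jstar.
Qed.

Lemma hom0_jshriek_istar (C : Obj Y) (A : Obj X) : hom0 (j_shriek C) (i_star A).
Proof. exact (hom0_adj HY HT Hj_shriek Hj_up adj_j_shriek (jup_istar_zero A)). Qed.

Lemma dim_hom_jshriek_jstar (C D : Obj Y) :
  \dim {: Mor T (j_shriek C) (j_star (j_up (j_shriek D)))} = \dim {: Mor Y C D}.
Proof.
rewrite (dim_hom_adj HY HT Hj_shriek Hj_up adj_j_shriek).
rewrite (dim_hom_isoR HCY _ (adj_counit_iso Hj_star adj_j_star ff_j_star _)).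
exact/esym/(dim_hom_isoR HCY _ (adj_unit_iso Hj_shriek adj_j_shriek ff_j_shriek _)).
Qed.

Lemma thick_recollement (P : Obj T -> Prop) : is_thick P ->
  (forall A, P (i_star A)) -> (forall C, P (j_shriek C)) -> forall Q, P Q.
Proof.
move=> thickP Pi Pj Q; have [_ P_sh _ _ _] := thickP.
case: HR => _ _ _ _ /(_ Q) [_ [h /(thick_dist_mid HT thickP)]].
by apply=> //; apply: P_sh.
Qed.
End Recollement.

Section Gluing.
Variables (K : fieldType) (X T Y : tri_data K).
Hypotheses (HX : is_triangulated X) (HT : is_triangulated T) (HY : is_triangulated Y).
Variable R : recollement_data X T Y.
Hypothesis HR : is_recollement R.
Variables (m n : nat) (SX : 'I_m -> Obj X) (SY : 'I_n -> Obj Y).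
Hypotheses (HSX : is_smc SX) (HSY : is_smc SY).

Local Notation i_star := (i_low_star R).
Local Notation j_shriek := (j_low_shriek R).
Local Notation j_star := (j_low_star R).

Variables (U V : 'I_n -> Obj X)
  (g : forall b, Mor X (U b) (i_up_shriek R (j_shriek (SY b))))
  (g' : forall b, Mor X (i_up_shriek R (j_shriek (SY b))) (V b))
  (g'' : forall b, Mor X (V b) (sh X (U b))).
Hypotheses (HU : forall b, Filt SX (fun k : int => 0 <= k) (U b))
  (HV : forall b, Filt SX (fun k : int => k <= -1) (V b))
  (Htrunc : forall b, dist X (g b) (g' b) (g'' b)).
Variables (W : 'I_n -> Obj T)
  (w : forall b, Mor T (j_shriek (SY b)) (W b))
  (w' : forall b, Mor T (W b) (sh T (i_star (U b)))).
Hypothesis Hsharp : forall b,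
  dist T (mcomp T (counit2 R (j_shriek (SY b))) (fmap i_star (g b))) (w b) (w' b).

Let HCT := tri_cat HT.
Let Hi_star : is_tri_functor i_star. Proof. by case: HR => -[]. Qed.
Let Hj_shriek : is_tri_functor j_shriek. Proof. by case: HR => -[]. Qed.
Let ff_i_star : fully_faithful i_star. Proof. by case: HR => _ _ []. Qed.

(* (##): the octahedral axiom applied to i_*(U_b) -> i_* i^! j_!(Y_b) -> j_!(Y_b),
   whose cones are i_*(V_b), j_* j^! j_!(Y_b) and, for the composite, W_b. *)
Lemma dist_glued (b : 'I_n) : exists (u : Mor T (i_star (V b)) (W b))
  (v : Mor T (W b) (j_star (j_up R (j_shriek (SY b))))) h, dist T u v h.
Proof.
case: HR => _ _ _ _ /(_ (j_shriek (SY b))) [[h1 dist_j] _].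
have [u [v [uvh _ _ _ _]]] :=
  tri_TR4 HT (fmap_dist Hi_star (Htrunc b)) dist_j (Hsharp b).
by exists u, v, (mcomp T (shm T (fmap i_star (g' b))) h1).
Qed.

Lemma hom0_istar_glued (A : Obj X) b : hom0 A (V b) -> hom0 (i_star A) (W b).
Proof.
move=> AV0; have [u [v [h uvh]]] := dist_glued b.
exact (hom0_dist_midR HT uvh (hom0_ff Hi_star ff_i_star AV0)
                              (hom0_istar_jstar HX HT HR)).
Qed.

Lemma hom0_jshriek_glued (C : Obj Y) b : hom0 C (SY b) -> hom0 (j_shriek C) (W b).
Proof.
move=> /hom0_dim CY0; have [u [v [h uvh]]] := dist_glued b.
apply: (hom0_dist_midR HT uvh (hom0_jshriek_istar HX HT HY HR)).
by apply/hom0_dim; rewrite dim_hom_jshriek_jstar.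
Qed.

Lemma hom0_sh_glued s a (Q : Obj T) :
  hom0 (iter s (sh T) (j_shriek (SY a))) Q ->
  hom0 (iter s.+1 (sh T) (i_star (U a))) Q -> hom0 (iter s (sh T) (W a)) Q.
Proof.
rewrite iterSr => jQ0 iQ0.
have [f [g1 [h fgh]]] := dist_iter_sh HT s (dist_rot HT (Hsharp a)).
exact (hom0_dist_midL HT fgh jQ0 iQ0).
Qed.

Lemma hom0_sh_istar_glued s (A : Obj X) b :
  Filt SX (fun k => 0 <= k) A -> hom0 (iter s (sh T) (i_star A)) (W b).
Proof.
move=> FA; apply: (hom0_isoL HCT (tfun_iter_sh_iso HT Hi_star s A)).
by apply: hom0_istar_glued; apply: (hom0_Filt_aisle_coaisle HX HSX _ FA (HV b)).
Qed.

Lemma hom0_sh_glued_istar s a (B : Obj X) :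
  Filt SX (fun l => l <= 0) B -> hom0 (iter s (sh T) (W a)) (i_star B).
Proof.
move=> FB; apply: hom0_sh_glued.
  apply: (hom0_isoL HCT (tfun_iter_sh_iso HT Hj_shriek s _)).
  exact: (hom0_jshriek_istar HX HT HY HR).
apply: (hom0_isoL HCT (tfun_iter_sh_iso HT Hi_star s.+1 _)).
apply: (hom0_ff Hi_star ff_i_star).
exact: (hom0_Filt_aisle_coaisle HX HSX _ (HU a) FB).
Qed.

Lemma hom0_sh_glued_glued s a b : (0 < s)%N -> hom0 (iter s (sh T) (W a)) (W b).
Proof.
move=> s_gt0; apply: hom0_sh_glued; last exact: hom0_sh_istar_glued (HU a).
apply: (hom0_isoL HCT (tfun_iter_sh_iso HT Hj_shriek s _)).
exact/hom0_jshriek_glued/(smc_hom0_sh HY HSY).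
Qed.

Lemma dim_hom_glued a b : \dim {: Mor T (W a) (W b)} = (a == b).
Proof.
rewrite (dim_hom_distL HT (Hsharp a) (hom0_sh_istar_glued (s := 0) (b := b) (HU a))
                                     (hom0_sh_istar_glued (s := 1) (b := b) (HU a))).
have [u [v [h uvh]]] := dist_glued b.
have jV0 := hom0_jshriek_istar HX HT HY HR (C := SY a) (A := V b).
have jsV0 := hom0_isoR HCT (tfun_sh_iso Hi_star (V b))
  (hom0_jshriek_istar HX HT HY HR (C := SY a) (A := sh X (V b))).
by rewrite (dim_hom_distR HT uvh jV0 jsV0) dim_hom_jshriek_jstar //; case: HSY.
Qed.

Local Notation glued := (glue i_star SX W).

Lemma glue_lshift a : glued (lshift n a) = i_star (SX a).
Proof. by rewrite /glue -[lshift n a]/(unsplit (inl a)) unsplitK. Qed.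
Lemma glue_rshift b : glued (rshift m b) = W b.
Proof. by rewrite /glue -[rshift m b]/(unsplit (inr b)) unsplitK. Qed.

Let SX_Filt_ge0 a : Filt SX (fun k => 0 <= k) (SX a). Proof. exact: Filt_gen a 0 _. Qed.
Let SX_Filt_le0 a : Filt SX (fun l => l <= 0) (SX a). Proof. exact: Filt_gen a 0 _. Qed.

Lemma dim_hom_glue k l : \dim {: Mor T (glued k) (glued l)} = (k == l).
Proof.
case: (split_ordP k) => a ->; case: (split_ordP l) => b ->.
- by rewrite !glue_lshift eq_lshift -(dim_hom_ff Hi_star ff_i_star); case: HSX.
- rewrite glue_lshift glue_rshift eq_lrshift; apply/hom0_dim.
  exact: (hom0_sh_istar_glued (s := 0) (SX_Filt_ge0 a)).
- rewrite glue_rshift glue_lshift eq_rlshift; apply/hom0_dim.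
  exact: (hom0_sh_glued_istar (s := 0) (a := a) (SX_Filt_le0 b)).
- by rewrite !glue_rshift eq_rshift dim_hom_glued.
Qed.

Lemma hom0_sh_glue s k l : (0 < s)%N -> hom0 (iter s (sh T) (glued k)) (glued l).
Proof.
move=> s_gt0; case: (split_ordP k) => a ->; case: (split_ordP l) => b ->;
  rewrite ?glue_lshift ?glue_rshift.
- apply: (hom0_isoL HCT (tfun_iter_sh_iso HT Hi_star s _)).
  exact/(hom0_ff Hi_star ff_i_star)/(smc_hom0_sh HX HSX).
- exact: hom0_sh_istar_glued (SX_Filt_ge0 a).
- exact: hom0_sh_glued_istar (SX_Filt_le0 b).
- exact: hom0_sh_glued_glued.
Qed.

Lemma thick_glue (P : Obj T -> Prop) : is_thick P -> (forall k, P (glued k)) ->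
  forall Q, P Q.
Proof.
move=> thickP Pglued; have [_ P_sh _ _ _] := thickP.
have Pi A : P (i_star A).
  case: HSX => _ _ /(_ _ (thick_preimage HX HT Hi_star thickP)); apply=> a.
  by rewrite -glue_lshift.
apply: (thick_recollement HT HR thickP Pi).
case: HSY => _ _ /(_ _ (thick_preimage HY HT Hj_shriek thickP)); apply=> b.
apply: (thick_dist_mid HT thickP (Hsharp b)); last exact/P_sh/Pi.
by rewrite -glue_rshift.
Qed.

Lemma glue_smc : is_smc glued.
Proof.
split; [exact: dim_hom_glue | | move=> P; exact: thick_glue].
move=> k l [t | t] // _; apply/hom0_dim/(hom0_iter_shinv HT t.+1).
exact: hom0_sh_glue.
Qed.
End Gluing.

Unset Implicit Arguments.
Theorem theorem3p6 (K : closedFieldType) (X T Y : tri_data K)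
  (HX : is_triangulated X) (HT : is_triangulated T) (HY : is_triangulated Y)
  (R : recollement_data X T Y) (HR : is_recollement R)
  (m n : nat) (SX : 'I_m -> Obj X) (SY : 'I_n -> Obj Y)
  (HSX : is_smc SX) (HSY : is_smc SY)
  (U V : 'I_n -> Obj X)
  (g : forall i, Mor X (U i) (i_up_shriek R (j_low_shriek R (SY i))))
  (g' : forall i, Mor X (i_up_shriek R (j_low_shriek R (SY i))) (V i))
  (g'' : forall i, Mor X (V i) (sh X (U i)))
  (HU : forall i, Filt SX (fun k : int => 0 <= k) (U i))
  (HV : forall i, Filt SX (fun k : int => k <= -1) (V i))
  (Htrunc : forall i, dist X (g i) (g' i) (g'' i))
  (W : 'I_n -> Obj T)
  (w : forall i, Mor T (j_low_shriek R (SY i)) (W i))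
  (w' : forall i, Mor T (W i) (sh T (i_low_star R (U i))))
  (Hsharp : forall i,
     dist T (mcomp T (counit2 R (j_low_shriek R (SY i)))
                    (fmap (i_low_star R) (g i)))
            (w i) (w' i)) :
  is_smc (glue (i_low_star R) SX W).
Proof. exact (glue_smc HX HT HY HR HSX HSY HU HV Htrunc Hsharp). Qed.
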